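(* Let $T(z)=z/(1-z)$ and, for a plane binary tree $t$, let $S_t(z)$ and its dominant singularity $\tilde\rho=\tilde\rho(t)$ be as in the context. Then for every $\eta>0$ there is $D>0$ independent of $n$ such that \[ \frac{[z^n]S_t(z)}{[z^n]T(z)} = \tilde\rho^{-n-1}\left(1+\mathcal{O}\!\left(\frac{\ln n}{n^{1-\eta}}\right)\right)\quad\text{as } n\to\infty, \] uniformly for all plane binary trees $t$ with $D\le |t|\le n$.
   Context: A plane binary tree is a rooted tree in which each node has a left and a right slot, each empty or holding a subtree; $|t|$ is its number of nodes. A plane increasing binary tree of size $n$ is such a tree whose $n$ nodes are labeled $1,\dots,n$ increasingly along every path from the root; their exponential generating function is $T(z)=z/(1-z)$. A fringe subtree is a node with all its descendants; its shape is obtained by forgetting labels. For $t$ with $k$ nodes, $w(t)=\ell(t)/k!$ where $\ell(t)$ is the number of increasing labelings of $t$. $S_t$ is the exponential generating function of plane increasing binary trees with no fringe subtree of shape $t$, the power series solution of $S_t'=(1+S_t)^2-w(t)kz^{k-1}$, $S_t(0)=0$; one has $S_t=-u'/u$ with $u$ the entire solution of $u''-2u'+(1-w(t)kz^{k-1})u=0$, $u(0)=-1$, $u'(0)=0$, and $\tilde\rho>1$ is the smallest positive zero of $u$. *)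

From Stdlib Require Import Reals Lra Lia.
From Coquelicot Require Import Coquelicot.
Open Scope R_scope.

(* Plane binary trees: each node has a left and a right slot, each either
   empty or holding a subtree.  [Empty] is the empty slot. *)
Inductive ptree : Type :=
| Empty : ptree
| Node : ptree -> ptree -> ptree.

Fixpoint psize (t : ptree) : nat :=
  match t with
  | Empty => 0%nat
  | Node l r => S (psize l + psize r)
  end.

(* l(t) = number of increasing labelings of t: the root gets the smallest
   label, the remaining |l|+|r| labels are split between the two subtrees
   (binomial choice) and labelled increasingly there. *)
Fixpoint nlab (t : ptree) : R :=
  match t with
  | Empty => 1
  | Node l r => Binomial.C (psize l + psize r) (psize l) * nlab l * nlab r
  end.

Definition wt (t : ptree) : R := nlab t / INR (Factorial.fact (psize t)).

Definition T_coef (n : nat) : R := match n with O => 0 | S _ => 1 end.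

(* s is the coefficient sequence of the power series solution S_t of
   S' = (1+S)^2 - w(t) k z^(k-1), S(0)=0  (k = |t|), written coefficientwise:
   [z^n] S' = (n+1) s_(n+1),  [z^n](1+S)^2 = [n=0] + 2 s_n + sum_{i<=n} s_i s_(n-i). *)
Definition is_S_coeffs (t : ptree) (s : nat -> R) : Prop :=
  s O = 0 /\
  forall n : nat,
    INR (S n) * s (S n) =
      (if Nat.eqb n 0 then 1 else 0) + 2 * s n
      + sum_f_R0 (fun i => s i * s (n - i)%nat) n
      - (if Nat.eqb n (psize t - 1) then wt t * INR (psize t) else 0).

(* u is (the restriction to the real line of) the solution of
   u'' - 2u' + (1 - w(t) k z^(k-1)) u = 0, u(0) = -1, u'(0) = 0. *)
Definition is_u (t : ptree) (u : R -> R) : Prop :=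
  exists u' : R -> R,
    (forall x, is_derive u x (u' x)) /\
    (forall x, is_derive u' x
        (2 * u' x - (1 - wt t * INR (psize t) * x ^ (psize t - 1)) * u x)) /\
    u 0 = -1 /\ u' 0 = 0.

Definition smallest_pos_zero (u : R -> R) (rho : R) : Prop :=
  0 < rho /\ u rho = 0 /\ (forall x, 0 < x < rho -> u x <> 0).

From Stdlib Require Import Reals Lra Lia.
From Coquelicot Require Import Coquelicot.
Open Scope R_scope.

(* With y(x) = e^(-x) u(x) the Riccati equation of F = 1 + S_t linearises: y'' = c x^(k-1) y
   with c = w(t) k in (0, 1], y(0) = -1, y'(0) = 1, and F = -y'/y coefficientwise.  For large k
   the perturbation c x^(k-1) is tiny on [0, 1 + 1/k]: comparing y with its Taylor polynomials
   shows that y stays within O(1/k^2) of x - 1 there, so the first zero rho of u lies in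
   (1/2, 1 + 1/k], and the Taylor tail of y at rho decays by a factor O(1/k^2) every k + 1
   coefficients.  Writing y = (x - rho) q, the series h = F - 1/(rho - x) solves h q = -q', and
   this decay of q turns, by induction on the coefficients, into |h_n| <= (rho kap)^(-n) for
   kap = k^((1 - eta)/k).  Since kap^n >= n^(1 - eta) for n >= k, the relative error of
   [z^n] S_t against rho^(-n-1) is at most 2 n^(eta - 1). *)

Lemma sum_f_R0_swap_triangle (f : nat -> nat -> R) (n : nat) :
  sum_f_R0 (fun i => sum_f_R0 (f i) i) n =
  sum_f_R0 (fun j => sum_f_R0 (fun l => f (j + l)%nat j) (n - j)) n.
Proof.
  induction n as [|n IH]; [reflexivity|].
  rewrite (tech5 (fun i => sum_f_R0 (f i) i)), IH, tech5.
  rewrite (tech5 (fun j => sum_f_R0 (fun l => f (j + l)%nat j) (S n - j))), Nat.sub_diag.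
  cbn [sum_f_R0]; rewrite Nat.add_0_r.
  rewrite (sum_eq (fun j => sum_f_R0 (fun l => f (j + l)%nat j) (S n - j))
             (fun j => sum_f_R0 (fun l => f (j + l)%nat j) (n - j) + f (S n) j)).
  - rewrite sum_plus; lra.
  - intros j Hj. replace (S n - j)%nat with (S (n - j)) by lia.
    rewrite tech5. do 2 f_equal. lia.
Qed.

Lemma sum_f_R0_delta (k : nat) (x : R) (n : nat) :
  sum_f_R0 (fun i => if Nat.eqb i k then x else 0) n = if Nat.leb k n then x else 0.
Proof.
  induction n as [|n IH].
  - destruct k; reflexivity.
  - rewrite tech5, IH.
    destruct (Nat.eqb_spec (S n) k), (Nat.leb_spec k n), (Nat.leb_spec k (S n)); try lia; ring.
Qed.

Lemma succ_mul_pow_le (x : R) (j : nat) : 0 <= x <= 1/2 -> INR (S j) * x ^ S j <= x.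
Proof.
  intros Hx. induction j as [|j IH]; [simpl; lra|].
  assert (x ^ j <= 1) by (rewrite <- (pow1 j); apply pow_incr; lra).
  assert (0 <= x ^ j) by (apply pow_le; lra).
  assert (0 <= INR (S j)) by apply pos_INR.
  rewrite S_INR. simpl pow in *. nra.
Qed.

Lemma sum_pow_succ_le (x : R) (n : nat) :
  0 <= x <= 1/2 -> sum_f_R0 (fun j => x ^ S j) n <= 2 * x.
Proof.
  intros Hx.
  rewrite (sum_eq _ (fun j => x ^ j * x)) by (intros; simpl; ring).
  rewrite <- scal_sum, tech3 by lra.
  assert (0 <= x ^ S n) by (apply pow_le; lra).
  assert ((1 - x ^ S n) / (1 - x) <= 2).
  { apply Rmult_le_reg_r with (1 - x); [lra|].
    unfold Rdiv. rewrite Rmult_assoc, Rinv_l by lra. lra. }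
  nra.
Qed.

Lemma sum_f_R0_nonneg_mono (g : nat -> R) (n m : nat) :
  (forall i, 0 <= g i) -> (n <= m)%nat -> sum_f_R0 g n <= sum_f_R0 g m.
Proof.
  intros Hg Hnm. destruct (Nat.eq_dec n m) as [<-|Hne]; [lra|].
  rewrite (tech2 g n m) by lia.
  pose proof (cond_pos_sum (fun i => g (S n + i)%nat) (m - S n) (fun i => Hg _)). lra.
Qed.

Lemma sum_f_R0_blocks (f a : nat -> R) (p : nat) : (1 <= p)%nat ->
  (forall i r, (r < p)%nat -> f (i * p + r)%nat <= a i) ->
  forall N, sum_f_R0 f (N * p + (p - 1)) <= INR p * sum_f_R0 a N.
Proof.
  intros Hp Hf.
  assert (Hblock : forall i, sum_f_R0 (fun r => f (i * p + r)%nat) (p - 1) <= INR p * a i).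
  { intros i. eapply Rle_trans; [apply (sum_Rle _ (fun _ => a i)) |].
    - intros r Hr. apply Hf. lia.
    - rewrite sum_cte. replace (S (p - 1)) with p by lia. lra. }
  induction N as [|N IH].
  - exact (Hblock O).
  - rewrite (tech2 f (N * p + (p - 1)) (S N * p + (p - 1))) by nia.
    replace (S N * p + (p - 1) - S (N * p + (p - 1)))%nat with (p - 1)%nat by nia.
    rewrite (sum_eq (fun i => f (S (N * p + (p - 1)) + i)%nat) (fun r => f (S N * p + r)%nat))
      by (intros; f_equal; nia).
    rewrite tech5. specialize (Hblock (S N)). lra.
Qed.

(** * Formal power series *)

(* Series are coefficient sequences: [PS_monom c k] is c X^k, [PS_mul_X_sub r a] is (X - r) a,
   [PS_div_X_sub r a] is the formal quotient a / (X - r), and [PS_geom r] is 1 / (r - X). *)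

Definition PS_monom (c : R) (k : nat) (n : nat) : R := if Nat.eqb n k then c else 0.

Definition PS_mul_X_sub (r : R) (a : nat -> R) (n : nat) : R := PS_incr_1 a n - r * a n.

Fixpoint PS_div_X_sub (r : R) (a : nat -> R) (n : nat) : R :=
  match n with
  | O => - a O / r
  | S m => (PS_div_X_sub r a m - a (S m)) / r
  end.

Definition PS_geom (r : R) (n : nat) : R := / r ^ S n.

Section CauchyProduct.

Implicit Types (a b c : nat -> R).

Lemma PS_mult_ext a a' b b' n :
  (forall i, a i = a' i) -> (forall i, b i = b' i) -> PS_mult a b n = PS_mult a' b' n.
Proof. intros Ha Hb. apply sum_eq. intros i _. now rewrite Ha, Hb. Qed.

Lemma PS_mult_plus_r a b c n :
  PS_mult a (fun i => b i + c i) n = PS_mult a b n + PS_mult a c n.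
Proof. unfold PS_mult. rewrite <- plus_sum. apply sum_eq. intros. ring. Qed.

Lemma PS_mult_minus_l a b c n :
  PS_mult (fun i => a i - b i) c n = PS_mult a c n - PS_mult b c n.
Proof. unfold PS_mult. rewrite <- minus_sum. apply sum_eq. intros. ring. Qed.

Lemma PS_mult_assoc a b c n :
  PS_mult (PS_mult a b) c n = PS_mult a (PS_mult b c) n.
Proof.
  unfold PS_mult.
  rewrite (sum_eq _ (fun i => sum_f_R0 (fun j => a j * b (i - j)%nat * c (n - i)%nat) i))
    by (intros; rewrite Rmult_comm, scal_sum; apply sum_eq; intros; ring).
  rewrite sum_f_R0_swap_triangle. apply sum_eq. intros j Hj.
  rewrite scal_sum. apply sum_eq. intros l _.
  replace (j + l - j)%nat with l by lia. replace (n - (j + l))%nat with (n - j - l)%nat by lia.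
  ring.
Qed.

Lemma PS_derive_mult a b n :
  PS_derive (PS_mult a b) n = PS_mult (PS_derive a) b n + PS_mult a (PS_derive b) n.
Proof.
  unfold PS_derive, PS_mult.
  rewrite scal_sum.
  transitivity (sum_f_R0 (fun i => INR i * a i * b (S n - i)%nat) (S n)
              + sum_f_R0 (fun i => INR (S n - i) * a i * b (S n - i)%nat) (S n)).
  { rewrite <- plus_sum. apply sum_eq. intros i Hi. rewrite minus_INR by lia. ring. }
  rewrite decomp_sum, tech5, Nat.sub_diag by lia.
  change (INR 0) with 0; simpl pred. rewrite !Rmult_0_l, Rplus_0_l, Rplus_0_r. f_equal.
  apply sum_eq. intros i Hi. replace (S n - i)%nat with (S (n - i)) by lia. ring.
Qed.

Lemma PS_mult_monom_l (c : R) (k : nat) b n :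
  PS_mult (PS_monom c k) b n = if Nat.leb k n then c * b (n - k)%nat else 0.
Proof.
  unfold PS_mult, PS_monom.
  rewrite (sum_eq _ (fun i => if Nat.eqb i k then c * b (n - k)%nat else 0)).
  - rewrite sum_f_R0_delta. reflexivity.
  - intros i _. destruct (Nat.eqb_spec i k); [subst; reflexivity | ring].
Qed.

Lemma PS_mult_last a b n :
  PS_mult a b (S n) = a (S n) * b O + sum_f_R0 (fun i => a i * b (S n - i)%nat) n.
Proof. unfold PS_mult. rewrite tech5, Nat.sub_diag. ring. Qed.

Lemma PS_mul_X_sub_O (r : R) a : PS_mul_X_sub r a O = - (r * a O).
Proof. unfold PS_mul_X_sub. change (PS_incr_1 a O) with 0. ring. Qed.

Lemma PS_mul_X_sub_S (r : R) a n : PS_mul_X_sub r a (S n) = a n - r * a (S n).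
Proof. reflexivity. Qed.

Lemma PS_mul_X_sub_div (r : R) a n : r <> 0 -> PS_mul_X_sub r (PS_div_X_sub r a) n = a n.
Proof.
  intros Hr. destruct n; [rewrite PS_mul_X_sub_O | rewrite PS_mul_X_sub_S]; simpl; field; exact Hr.
Qed.

Lemma PS_mul_X_sub_eq0 (r : R) a : r <> 0 ->
  (forall n, PS_mul_X_sub r a n = 0) -> forall n, a n = 0.
Proof.
  intros Hr H n. apply (Rmult_eq_reg_l r); [|exact Hr]. induction n as [|n IH].
  - specialize (H O). rewrite PS_mul_X_sub_O in H. lra.
  - specialize (H (S n)). rewrite PS_mul_X_sub_S in H.
    assert (a n = 0) by (apply (Rmult_eq_reg_l r); [lra | exact Hr]). lra.
Qed.

Lemma PS_mult_mul_X_sub_r (r : R) a b n :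
  PS_mult a (PS_mul_X_sub r b) n = PS_mul_X_sub r (PS_mult a b) n.
Proof.
  destruct n as [|n].
  - rewrite PS_mul_X_sub_O. unfold PS_mult. simpl. rewrite PS_mul_X_sub_O. ring.
  - rewrite PS_mul_X_sub_S, PS_mult_last, PS_mul_X_sub_O.
    unfold PS_mult. rewrite (scal_sum _ (S n)), tech5, Nat.sub_diag.
    rewrite (sum_eq _ (fun i => a i * b (n - i)%nat - a i * b (S n - i)%nat * r)), minus_sum.
    + ring.
    + intros i Hi. replace (S n - i)%nat with (S (n - i)) by lia.
      rewrite PS_mul_X_sub_S. ring.
Qed.

Lemma PS_mul_X_sub_geom (r : R) b n : r <> 0 ->
  PS_mul_X_sub r (PS_mult (PS_geom r) b) n = - b n.
Proof.
  intros Hr. destruct n as [|n].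
  - rewrite PS_mul_X_sub_O. unfold PS_mult, PS_geom. simpl. field. exact Hr.
  - rewrite PS_mul_X_sub_S. unfold PS_mult at 2. rewrite decomp_sum by lia. simpl pred.
    rewrite (sum_eq _ (fun i => PS_geom r i * b (n - i)%nat * / r)), <- scal_sum.
    + fold (PS_mult (PS_geom r) b n). rewrite Nat.sub_0_r. unfold PS_geom. simpl. field. exact Hr.
    + intros i _. unfold PS_geom. simpl. field. split; [exact Hr | now apply pow_nonzero].
Qed.

Lemma PS_derive_mul_X_sub (r : R) b n :
  PS_derive (PS_mul_X_sub r b) n = b n + PS_mul_X_sub r (PS_derive b) n.
Proof.
  unfold PS_derive. rewrite !PS_mul_X_sub_S.
  destruct n as [|n]; [rewrite PS_mul_X_sub_O | rewrite PS_mul_X_sub_S, S_INR]; simpl; ring.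
Qed.

Lemma PS_eq0_of_derive_mult a e : e O = 0 ->
  (forall n, PS_derive e n = PS_mult a e n) -> forall n, e n = 0.
Proof.
  intros He0 He n. induction n as [n IH] using (well_founded_induction Wf_nat.lt_wf).
  destruct n as [|n]; [exact He0|].
  assert (Hd : INR (S n) * e (S n) = 0).
  { change (PS_derive e n = 0). rewrite He. apply sum_eq_R0. intros i Hi.
    rewrite (IH (n - i)%nat) by lia. ring. }
  apply Rmult_integral in Hd as [Hd|Hd]; [|exact Hd].
  exfalso. exact (not_0_INR _ (Nat.neq_succ_0 n) Hd).
Qed.

End CauchyProduct.

Lemma riccati_mult_linear (c : R) (k : nat) (F v : nat -> R) :
  (forall n, PS_derive F n = PS_mult F F n - PS_monom c k n) ->
  (forall n, PS_derive (PS_derive v) n = PS_mult (PS_monom c k) v n) ->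
  F O = 1 -> v O = -1 -> v 1%nat = 1 ->
  forall n, PS_mult F v n = - PS_derive v n.
Proof.
  intros HF Hv HF0 Hv0 Hv1 n.
  set (e := fun n => PS_mult F v n + PS_derive v n).
  enough (He : e n = 0) by (unfold e in He; lra).
  apply (PS_eq0_of_derive_mult F).
  - unfold e, PS_mult, PS_derive. simpl. rewrite HF0, Hv0, Hv1. ring.
  - intros m. unfold e.
    transitivity (PS_derive (PS_mult F v) m + PS_derive (PS_derive v) m).
    { unfold PS_derive. ring. }
    rewrite PS_derive_mult, PS_mult_plus_r, Hv, <- PS_mult_assoc.
    rewrite (PS_mult_ext (PS_derive F) (fun i => PS_mult F F i - PS_monom c k i) v v) by auto.
    rewrite PS_mult_minus_l, !PS_mult_monom_l. ring.
Qed.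

Lemma log_derive_remove_pole (r : R) (F v q : nat -> R) : r <> 0 ->
  (forall n, PS_mult F v n = - PS_derive v n) ->
  (forall n, v n = PS_mul_X_sub r q n) ->
  forall n, PS_mult (fun i => F i - PS_geom r i) q n = - PS_derive q n.
Proof.
  intros Hr HFv Hvq n.
  set (e := fun n => PS_mult F q n + PS_derive q n - PS_mult (PS_geom r) q n).
  enough (He : e n = 0) by (unfold e in He; rewrite PS_mult_minus_l; lra).
  apply (PS_mul_X_sub_eq0 r e Hr). intros m.
  transitivity (PS_mul_X_sub r (PS_mult F q) m + PS_mul_X_sub r (PS_derive q) m
                - PS_mul_X_sub r (PS_mult (PS_geom r) q) m).
  { unfold e. destruct m; [rewrite !PS_mul_X_sub_O | rewrite !PS_mul_X_sub_S]; ring. }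
  rewrite PS_mul_X_sub_geom by exact Hr.
  rewrite <- PS_mult_mul_X_sub_r, (PS_mult_ext F F _ v) by (auto; intros; symmetry; auto).
  rewrite HFv. unfold PS_derive at 1. rewrite Hvq.
  change (INR (S m) * PS_mul_X_sub r q (S m)) with (PS_derive (PS_mul_X_sub r q) m).
  rewrite PS_derive_mul_X_sub. ring.
Qed.

Lemma log_derive_coef_bound (h q : nat -> R) (rad : R) : 0 < rad -> 0 < q O ->
  (forall n, PS_mult h q n = - PS_derive q n) ->
  (forall n, INR (S n) * Rabs (q (S n)) * rad ^ n <= q O / 2) ->
  (forall n, sum_f_R0 (fun i => Rabs (q (S i)) * rad ^ S i) n <= q O / 2) ->
  forall n, Rabs (h n) * rad ^ n <= 1.
Proof.
  intros Hrad Hq0 Hhq Hder Htail n.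
  induction n as [n IH] using (well_founded_induction Wf_nat.lt_wf).
  assert (Hradn : 0 < rad ^ n) by (apply pow_lt; exact Hrad).
  assert (Hrest : exists T, h n * q O = - PS_derive q n - T /\ Rabs T * rad ^ n <= q O / 2).
  { destruct n as [|m].
    - exists 0. split; [rewrite <- Hhq; unfold PS_mult; simpl; ring | rewrite Rabs_R0; lra].
    - exists (sum_f_R0 (fun i => h i * q (S m - i)%nat) m).
      split; [rewrite <- Hhq, PS_mult_last; ring|].
      eapply Rle_trans; [apply Rmult_le_compat_r; [lra | apply sum_f_R0_triangle]|].
      rewrite Rmult_comm, scal_sum.
      eapply Rle_trans; [apply (sum_Rle _ (fun i => Rabs (q (S (m - i))) * rad ^ S (m - i)))|].
      + intros i Hi. replace (S (m - i)) with (S m - i)%nat by lia.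
        rewrite Rabs_mult.
        replace (rad ^ S m) with (rad ^ i * rad ^ (S m - i)) by (rewrite <- pow_add; f_equal; lia).
        specialize (IH i ltac:(lia)).
        assert (0 <= Rabs (q (S m - i)%nat) * rad ^ (S m - i)).
        { apply Rmult_le_pos; [apply Rabs_pos | apply pow_le; lra]. }
        nra.
      + rewrite (sum_f_R0_skip (fun j => Rabs (q (S j)) * rad ^ S j)). apply Htail. }
  destruct Hrest as [T [HT HTb]].
  assert (HD : Rabs (PS_derive q n) * rad ^ n <= q O / 2).
  { unfold PS_derive. rewrite Rabs_mult, (Rabs_pos_eq (INR _)) by apply pos_INR. apply Hder. }
  assert (Habs : Rabs (h n) * q O <= Rabs (PS_derive q n) + Rabs T).
  { rewrite <- (Rabs_pos_eq (q O)) by lra. rewrite <- Rabs_mult, HT.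
    unfold Rminus. rewrite <- (Rabs_Ropp (PS_derive q n)), <- (Rabs_Ropp T). apply Rabs_triang. }
  apply (Rmult_le_reg_r (q O)); [exact Hq0|]. nra.
Qed.

Section BlockDecay.

Variables (q : nat -> R) (p : nat) (rho kap B b : R).
Hypotheses (Hp : (1 <= p)%nat) (Hrho : 1/2 < rho) (Hkap : 1 <= kap) (HB : 1 <= B) (Hb : 0 <= b)
  (Hsmall : 4 * INR p * B * (b * kap ^ p) <= 1)
  (Hdecay : forall i m, (1 + i * p <= m)%nat -> Rabs (q m) * rho ^ S m <= B * b ^ S i).

Let x := b * kap ^ p.

Lemma block_ratio_bounds : 0 <= x <= 1/2 /\ 2 * INR p * B * x <= 1/2.
Proof.
  assert (HP : 1 <= INR p) by (apply (le_INR 1); exact Hp).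
  assert (Hx0 : 0 <= x) by (apply Rmult_le_pos; [exact Hb | apply pow_le; lra]).
  assert (HpB : 1 <= INR p * B) by nra.
  assert (x <= INR p * B * x) by nra.
  fold x in Hsmall. split; [split|]; nra.
Qed.

Lemma block_coef_bound (j m : nat) : (1 + j * p <= m)%nat -> (m <= S j * p)%nat ->
  Rabs (q m) * (rho * kap) ^ m <= B * x ^ S j / rho.
Proof.
  intros H1 H2.
  rewrite Rpow_mult_distr.
  replace (Rabs (q m) * (rho ^ m * kap ^ m)) with (Rabs (q m) * rho ^ S m * kap ^ m / rho)
    by (simpl; field; lra).
  unfold Rdiv. apply Rmult_le_compat_r; [apply Rlt_le, Rinv_0_lt_compat; lra|].
  unfold x. rewrite Rpow_mult_distr, <- pow_mult, <- Rmult_assoc.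
  apply Rmult_le_compat; [apply Rmult_le_pos; [apply Rabs_pos | apply pow_le; lra]
                         | apply pow_le; lra | apply Hdecay; exact H1 | ].
  apply Rle_pow; [exact Hkap | lia].
Qed.

Lemma block_derive_bound (n : nat) : INR (S n) * Rabs (q (S n)) * (rho * kap) ^ n <= / rho / 2.
Proof.
  destruct block_ratio_bounds as [Hx Hpx].
  set (j := (n / p)%nat).
  assert (Hn : (j * p <= n < S j * p)%nat).
  { unfold j. pose proof (Nat.div_mod_eq n p). pose proof (Nat.mod_upper_bound n p ltac:(lia)).
    simpl. nia. }
  assert (HS : INR (S n) <= INR (S j) * INR p) by (rewrite <- mult_INR; apply le_INR; nia).
  pose proof (block_coef_bound j (S n) ltac:(nia) ltac:(nia)) as Hq.
  assert (HR : 1/2 <= rho * kap) by nra.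
  assert (HRn : 0 < (rho * kap) ^ n) by (apply pow_lt; lra).
  assert (0 <= Rabs (q (S n)) * (rho * kap) ^ n) by (apply Rmult_le_pos; [apply Rabs_pos | lra]).
  assert (Hq' : Rabs (q (S n)) * (rho * kap) ^ n <= 2 * (B * x ^ S j / rho)).
  { replace (Rabs (q (S n)) * (rho * kap) ^ S n)
      with (Rabs (q (S n)) * (rho * kap) ^ n * (rho * kap)) in Hq by (simpl; ring).
    nra. }
  pose proof (succ_mul_pow_le x j Hx).
  apply Rle_trans with (INR (S j) * INR p * (2 * (B * x ^ S j / rho))).
  { rewrite Rmult_assoc.
    apply Rmult_le_compat; [apply pos_INR | assumption | exact HS | exact Hq']. }
  replace (INR (S j) * INR p * (2 * (B * x ^ S j / rho)))
    with (2 * INR p * B * (INR (S j) * x ^ S j) / rho) by (field; lra).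
  replace (/ rho / 2) with ((1/2) / rho) by (field; lra).
  unfold Rdiv. apply Rmult_le_compat_r; [apply Rlt_le, Rinv_0_lt_compat; lra|].
  assert (0 <= 2 * INR p * B) by (pose proof (pos_INR p); nra). nra.
Qed.

Lemma block_tail_bound (n : nat) :
  sum_f_R0 (fun i => Rabs (q (S i)) * (rho * kap) ^ S i) n <= / rho / 2.
Proof.
  destruct block_ratio_bounds as [Hx Hpx].
  set (f := fun m => Rabs (q m) * (rho * kap) ^ m).
  assert (Hf : forall m, 0 <= f m).
  { intros m. apply Rmult_le_pos; [apply Rabs_pos | apply pow_le; nra]. }
  apply Rle_trans with (sum_f_R0 (fun i => f (S i)) (n * p + (p - 1))).
  { apply sum_f_R0_nonneg_mono; [intros; apply Hf | nia]. }
  eapply Rle_trans.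
  { apply (sum_f_R0_blocks _ (fun j => x ^ S j * (B / rho)) p Hp). intros i r Hr.
    eapply Rle_trans; [apply (block_coef_bound i); nia | right; field; lra]. }
  rewrite <- scal_sum.
  pose proof (sum_pow_succ_le x n Hx).
  assert (0 < B / rho) by (apply Rdiv_lt_0_compat; lra).
  apply Rle_trans with (INR p * (B / rho * (2 * x))).
  { apply Rmult_le_compat_l; [apply pos_INR | apply Rmult_le_compat_l; lra]. }
  replace (INR p * (B / rho * (2 * x))) with (2 * INR p * B * x / rho) by (field; lra).
  replace (/ rho / 2) with ((1/2) / rho) by (field; lra).
  unfold Rdiv. apply Rmult_le_compat_r; [apply Rlt_le, Rinv_0_lt_compat; lra | exact Hpx].
Qed.

End BlockDecay.

(** * Comparison and energy estimates *)

Lemma is_derive_nonneg_le (f f' : R -> R) (a b : R) :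
  (forall x, is_derive f x (f' x)) -> a <= b ->
  (forall x, a <= x <= b -> 0 <= f' x) -> f a <= f b.
Proof.
  intros Hd Hab Hpos. destruct (Req_dec a b) as [<-|Hne]; [lra|].
  destruct (MVT_cor2 f f' a b) as [c [Hc1 Hc2]]; [lra | intros; apply is_derive_Reals, Hd|].
  assert (0 <= f' c) by (apply Hpos; lra). nra.
Qed.

Lemma le_of_second_derive_le (f f' f'' g g' g'' : R -> R) (X : R) :
  (forall x, is_derive f x (f' x)) -> (forall x, is_derive f' x (f'' x)) ->
  (forall x, is_derive g x (g' x)) -> (forall x, is_derive g' x (g'' x)) ->
  f 0 = g 0 -> f' 0 = g' 0 -> (forall x, 0 <= x <= X -> f'' x <= g'' x) ->
  forall x, 0 <= x <= X -> f x <= g x.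
Proof.
  intros Hf Hf' Hg Hg' H0 H0' Hle x Hx.
  assert (Hd' : forall t, 0 <= t <= X -> 0 <= g' t - f' t).
  { intros t Ht. replace 0 with (g' 0 - f' 0) by lra.
    apply (is_derive_nonneg_le (fun t => g' t - f' t) (fun t => g'' t - f'' t)); [|lra|].
    - intros s. apply (is_derive_minus g' f'); auto.
    - intros s Hs. specialize (Hle s ltac:(lra)). lra. }
  enough (0 <= g x - f x) by lra. replace 0 with (g 0 - f 0) by lra.
  apply (is_derive_nonneg_le (fun t => g t - f t) (fun t => g' t - f' t)); [|lra|].
  - intros s. apply (is_derive_minus g f); auto.
  - intros s Hs. apply Hd'. lra.
Qed.

Definition iint_monom (c : R) (k : nat) (x : R) : R :=
  c * x ^ S (S k) / (INR (S k) * INR (S (S k))).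

Lemma is_derive_pow_S (n : nat) (x : R) : is_derive (fun t => t ^ S n) x (INR (S n) * x ^ n).
Proof. auto_derive; [exact I|]. rewrite S_INR. destruct n; simpl; ring. Qed.

Lemma Rabs_le_of_second_derive (f f' w : R -> R) (c W X : R) (k : nat) : 0 <= c ->
  (forall x, is_derive f x (f' x)) -> (forall x, is_derive f' x (c * x ^ k * w x)) ->
  f 0 = 0 -> f' 0 = 0 -> (forall x, 0 <= x <= X -> Rabs (w x) <= W) ->
  forall x, 0 <= x <= X -> Rabs (f x) <= W * iint_monom c k x.
Proof.
  intros Hc Hf Hf' H0 H0' Hw x Hx.
  assert (Hk : 0 < INR (S k)) by (apply lt_0_INR; lia).
  assert (Hk' : 0 < INR (S (S k))) by (apply lt_0_INR; lia).
  set (a := W * c / (INR (S k) * INR (S (S k)))).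
  set (g := fun t => a * t ^ S (S k)).
  set (g' := fun t => a * INR (S (S k)) * t ^ S k).
  assert (Hg : forall t, is_derive g t (g' t)).
  { intros t. unfold g'. rewrite Rmult_assoc. apply is_derive_scal, is_derive_pow_S. }
  assert (Hg' : forall t, is_derive g' t (W * (c * t ^ k))).
  { intros t. replace (W * (c * t ^ k)) with (a * INR (S (S k)) * (INR (S k) * t ^ k))
      by (unfold a; field; lra).
    apply is_derive_scal, is_derive_pow_S. }
  assert (Hgx : g x = W * iint_monom c k x) by (unfold g, a, iint_monom; field; lra).
  assert (Hcmp : forall s, 0 <= s <= X -> c * s ^ k * w s <= W * (c * s ^ k)
                                /\ - (c * s ^ k * w s) <= W * (c * s ^ k)).
  { intros s Hs. specialize (Hw s Hs). apply Rabs_le_between in Hw.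
    assert (0 <= c * s ^ k) by (apply Rmult_le_pos; [lra | apply pow_le; lra]). split; nra. }
  assert (Hg0 : g 0 = 0) by (unfold g; simpl; ring).
  assert (Hg'0 : g' 0 = 0) by (unfold g'; simpl; ring).
  apply Rabs_le_between. split.
  - enough (- f x <= g x) by lra.
    assert (Hnf : forall t, is_derive (fun t => - f t) t (- f' t))
      by (intros; apply (is_derive_opp f), Hf).
    assert (Hnf' : forall t, is_derive (fun t => - f' t) t (- (c * t ^ k * w t)))
      by (intros; apply (is_derive_opp f'), Hf').
    apply (le_of_second_derive_le _ _ _ g g' (fun t => W * (c * t ^ k)) X Hnf Hnf' Hg Hg');
      try lra.
    intros s Hs. apply Hcmp. exact Hs.
  - rewrite <- Hgx.
    apply (le_of_second_derive_le f f' _ g g' (fun t => W * (c * t ^ k)) X Hf Hf' Hg Hg'); try lra.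
    intros s Hs. apply Hcmp. exact Hs.
Qed.

Lemma is_derive_Rmult (f g : R -> R) (x df dg : R) :
  is_derive f x df -> is_derive g x dg -> is_derive (fun t => f t * g t) x (df * g x + f x * dg).
Proof.
  intros Hf Hg. apply is_derive_Reals.
  apply (derivable_pt_lim_mult f g); apply is_derive_Reals; assumption.
Qed.

Lemma is_derive_exp_scal (a x : R) : is_derive (fun t => exp (a * t)) x (a * exp (a * x)).
Proof. auto_derive; [exact I | ring]. Qed.

Lemma energy_le_exp (y z g : R -> R) (X : R) :
  (forall x, is_derive y x (z x)) -> (forall x, is_derive z x (g x * y x)) ->
  (forall x, 0 <= x <= X -> 0 <= g x <= 9) ->
  forall x, 0 <= x <= X -> y x ^ 2 + z x ^ 2 <= (y 0 ^ 2 + z 0 ^ 2) * exp (10 * x).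
Proof.
  intros Hy Hz Hg x Hx.
  set (E := fun t => y t * y t + z t * z t).
  set (E' := fun t => 2 * y t * z t + 2 * z t * (g t * y t)).
  assert (HE : forall t, is_derive E t (E' t)).
  { intros t. unfold E, E'.
    replace (2 * y t * z t + 2 * z t * (g t * y t))
      with (z t * y t + y t * z t + (g t * y t * z t + z t * (g t * y t))) by ring.
    apply (is_derive_plus (fun t => y t * y t) (fun t => z t * z t));
      apply is_derive_Rmult; auto. }
  set (G := fun t => - (E t * exp (-10 * t))).
  assert (HG : forall t, is_derive G t ((10 * E t - E' t) * exp (-10 * t))).
  { intros t. unfold G.
    replace ((10 * E t - E' t) * exp (-10 * t))
      with (- (E' t * exp (-10 * t) + E t * (-10 * exp (-10 * t)))) by ring.
    apply (is_derive_opp (fun t => E t * exp (-10 * t))).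
    apply (is_derive_Rmult E (fun t => exp (-10 * t))); [apply HE | apply is_derive_exp_scal]. }
  assert (Hmono : G 0 <= G x).
  { apply (is_derive_nonneg_le G _ 0 x HG); [lra|].
    intros t Ht. apply Rmult_le_pos; [|apply Rlt_le, exp_pos].
    destruct (Hg t ltac:(lra)) as [g0 g9]. unfold E, E'.
    replace (10 * (y t * y t + z t * z t) - (2 * y t * z t + 2 * z t * (g t * y t)))
      with ((1 + g t) * ((y t - z t) * (y t - z t)) + (9 - g t) * (y t * y t + z t * z t))
      by ring.
    assert (0 <= (y t - z t) * (y t - z t)) by apply Rle_0_sqr.
    assert (0 <= y t * y t + z t * z t) by (apply Rplus_le_le_0_compat; apply Rle_0_sqr).
    apply Rplus_le_le_0_compat; apply Rmult_le_pos; lra. }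
  unfold G in Hmono. rewrite Rmult_0_r, exp_0, Rmult_1_r in Hmono.
  assert (Hexp : exp (-10 * x) * exp (10 * x) = 1)
    by (rewrite <- exp_plus, <- exp_0; f_equal; ring).
  assert (Hpos : 0 < exp (10 * x)) by apply exp_pos.
  unfold E in Hmono. simpl. nra.
Qed.

Definition damped (f : R -> R) (x : R) : R := exp (- x) * f x.

Lemma damped_linear_ode (c : R) (k : nat) (u u' : R -> R) :
  (forall x, is_derive u x (u' x)) ->
  (forall x, is_derive u' x (2 * u' x - (1 - c * x ^ k) * u x)) ->
  (forall x, is_derive (damped u) x (damped (fun t => u' t - u t) x)) /\
  (forall x, is_derive (damped (fun t => u' t - u t)) x (c * x ^ k * damped u x)).
Proof.
  intros Hu Hu'.
  assert (He : forall x, is_derive (fun t => exp (- t)) x (- exp (- x))).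
  { intros x. auto_derive; [exact I | ring]. }
  split; intros x; unfold damped.
  - replace (exp (- x) * (u' x - u x)) with (- exp (- x) * u x + exp (- x) * u' x) by ring.
    apply (is_derive_Rmult (fun t => exp (- t)) u); auto.
  - replace (c * x ^ k * (exp (- x) * u x))
      with (- exp (- x) * (u' x - u x)
            + exp (- x) * ((2 * u' x - (1 - c * x ^ k) * u x) - u' x)) by ring.
    apply (is_derive_Rmult (fun t => exp (- t)) (fun t => u' t - u t)); auto.
    apply (is_derive_minus u' u); auto.
Qed.

(** * Taylor expansion of the linearised equation *)

(* Taylor coefficients of the solution of y'' = c x^k y, y(0) = -1, y'(0) = 1; the recursion
   reaches back k + 2 indices, hence the fuel, which only has to exceed the index. *)
Fixpoint lin_coef_fuel (c : R) (k fuel m : nat) : R :=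
  match fuel, m with
  | O, _ => 0
  | S _, O => -1
  | S _, S O => 1
  | S f, S (S m') =>
      if Nat.leb k m' then c * lin_coef_fuel c k f (m' - k) / (INR (S (S m')) * INR (S m'))
      else 0
  end.

Definition lin_coef (c : R) (k m : nat) : R := lin_coef_fuel c k (S m) m.

Lemma lin_coef_fuel_indep (c : R) (k f1 f2 m : nat) :
  (m < f1)%nat -> (m < f2)%nat -> lin_coef_fuel c k f1 m = lin_coef_fuel c k f2 m.
Proof.
  revert f2 m. induction f1 as [|f1 IH]; intros f2 m H1 H2; [lia|].
  destruct f2 as [|f2]; [lia|].
  destruct m as [|[|m]]; simpl; auto.
  destruct (Nat.leb k m); [rewrite (IH f2) by lia|]; reflexivity.
Qed.

Lemma lin_coef_O (c : R) (k : nat) : lin_coef c k O = -1.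
Proof. reflexivity. Qed.

Lemma lin_coef_1 (c : R) (k : nat) : lin_coef c k 1%nat = 1.
Proof. reflexivity. Qed.

Lemma lin_coef_SS (c : R) (k m : nat) :
  lin_coef c k (S (S m)) =
  if Nat.leb k m then c * lin_coef c k (m - k) / (INR (S (S m)) * INR (S m)) else 0.
Proof.
  transitivity (if Nat.leb k m
                then c * lin_coef_fuel c k (S (S m)) (m - k) / (INR (S (S m)) * INR (S m))
                else 0); [reflexivity|].
  destruct (Nat.leb k m); [|reflexivity].
  unfold lin_coef. rewrite (lin_coef_fuel_indep c k (S (S m)) (S (m - k))) by lia.
  reflexivity.
Qed.

Lemma lin_coef_derive2 (c : R) (k m : nat) :
  PS_derive (PS_derive (lin_coef c k)) m = PS_mult (PS_monom c k) (lin_coef c k) m.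
Proof.
  rewrite PS_mult_monom_l. unfold PS_derive. rewrite lin_coef_SS.
  destruct (Nat.leb k m); [|ring].
  assert (0 < INR (S m)) by (apply lt_0_INR; lia).
  assert (0 < INR (S (S m))) by (apply lt_0_INR; lia).
  field. lra.
Qed.

Definition taylor (a : nat -> R) (M : nat) (x : R) : R := sum_f_R0 (fun j => a j * x ^ j) M.

Lemma taylor_0 (a : nat -> R) (M : nat) : taylor a M 0 = a O.
Proof.
  induction M as [|M IH]; unfold taylor in *; [simpl; ring|].
  rewrite tech5, IH, pow_i by lia. ring.
Qed.

Lemma is_derive_taylor (a : nat -> R) (M : nat) (x : R) :
  is_derive (taylor a (S M)) x (taylor (PS_derive a) M x).
Proof.
  induction M as [|M IH].
  - unfold taylor, PS_derive. simpl. auto_derive; [exact I | ring].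
  - apply (is_derive_ext (fun t => taylor a (S M) t + a (S (S M)) * t ^ S (S M))).
    { intros t. unfold taylor. rewrite tech5. reflexivity. }
    unfold taylor at 2. rewrite tech5. fold (taylor (PS_derive a) M x).
    replace (PS_derive a (S M) * x ^ S M) with (a (S (S M)) * (INR (S (S M)) * x ^ S M))
      by (unfold PS_derive; ring).
    apply (is_derive_plus (taylor a (S M)) (fun t => a (S (S M)) * t ^ S (S M))); [exact IH|].
    apply is_derive_scal, is_derive_pow_S.
Qed.

Lemma taylor_mult_monom (c : R) (k : nat) (a : nat -> R) (M : nat) (x : R) :
  taylor (PS_mult (PS_monom c k) a) M x =
  if Nat.leb k M then c * x ^ k * taylor a (M - k) x else 0.
Proof.
  unfold taylor.
  rewrite (sum_eq _ (fun j => (if Nat.leb k j then c * a (j - k)%nat else 0) * x ^ j))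
    by (intros; rewrite PS_mult_monom_l; reflexivity).
  induction M as [|M IH].
  - destruct k; simpl; ring.
  - rewrite tech5, IH.
    destruct (Nat.leb_spec k M), (Nat.leb_spec k (S M)); try lia.
    + replace (S M - k)%nat with (S (M - k)) by lia. rewrite tech5.
      replace (x ^ S M) with (x ^ k * x ^ S (M - k)) by (rewrite <- pow_add; f_equal; lia).
      ring.
    + replace k with (S M) by lia. rewrite Nat.sub_diag. simpl. ring.
    + ring.
Qed.

Lemma PS_div_X_sub_pow (r : R) (a : nat -> R) (m : nat) : r <> 0 ->
  PS_div_X_sub r a m * r ^ S m = - taylor a m r.
Proof.
  intros Hr. induction m as [|m IH]; unfold taylor in *.
  - simpl. field. exact Hr.
  - rewrite tech5, Ropp_plus_distr, <- IH. simpl. field. exact Hr.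
Qed.

Section TaylorRemainder.

Variables (c X Y : R) (k : nat) (y z : R -> R).
Hypotheses (Hc : 0 <= c) (HX : 0 <= X) (Hb : iint_monom c k X <= 1)
  (Hy : forall x, is_derive y x (z x)) (Hz : forall x, is_derive z x (c * x ^ k * y x))
  (Hy0 : y 0 = -1) (Hz0 : z 0 = 1) (HY : forall x, 0 <= x <= X -> Rabs (y x) <= Y).

Definition remainder (M : nat) (x : R) : R := y x - taylor (lin_coef c k) M x.

Lemma remainder_derivatives (M : nat) : (1 <= M)%nat ->
  exists d, (forall x, is_derive (remainder M) x (d x)) /\ d 0 = 0 /\
    forall x, is_derive d x
      (c * x ^ k * (if Nat.leb (S (S k)) M then remainder (M - S (S k)) x else y x)).
Proof.
  intros HM. destruct M as [|M]; [lia|].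
  exists (fun x => z x - taylor (PS_derive (lin_coef c k)) M x). split; [|split].
  - intros x. apply (is_derive_minus y (taylor _ (S M))); [apply Hy | apply is_derive_taylor].
  - rewrite taylor_0, Hz0. unfold PS_derive. rewrite lin_coef_1. simpl. ring.
  - intros x. destruct M as [|M].
    + apply (is_derive_ext (fun t => z t - PS_derive (lin_coef c k) O)).
      { intros t. unfold taylor. simpl. ring. }
      replace (c * x ^ k * _) with (c * x ^ k * y x - 0) by (simpl; ring).
      apply (is_derive_minus z (fun _ => _));
        [apply Hz | exact (@is_derive_const R_AbsRing R_NormedModule _ _)].
    + assert (Ht : taylor (PS_derive (PS_derive (lin_coef c k))) M x =
                   if Nat.leb k M then c * x ^ k * taylor (lin_coef c k) (M - k) x else 0).
      { rewrite <- taylor_mult_monom. unfold taylor. apply sum_eq. intros.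
        rewrite lin_coef_derive2. reflexivity. }
      replace (c * x ^ k * _)
        with (c * x ^ k * y x - taylor (PS_derive (PS_derive (lin_coef c k))) M x).
      { apply (is_derive_minus z (taylor _ (S M))); [apply Hz | apply is_derive_taylor]. }
      rewrite Ht. simpl Nat.leb. simpl Nat.sub. unfold remainder.
      destruct (Nat.leb k M); ring.
Qed.

Lemma remainder_bound_step (M : nat) (W : R) : (1 <= M)%nat ->
  (forall x, 0 <= x <= X ->
     Rabs (if Nat.leb (S (S k)) M then remainder (M - S (S k)) x else y x) <= W) ->
  forall x, 0 <= x <= X -> Rabs (remainder M x) <= W * iint_monom c k X.
Proof.
  intros HM HW x Hx.
  destruct (remainder_derivatives M HM) as [d [Hd [Hd0 Hd']]].
  assert (HW0 : 0 <= W) by (eapply Rle_trans; [apply Rabs_pos | apply (HW 0); lra]).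
  eapply Rle_trans; [apply (Rabs_le_of_second_derive _ d _ c W X k Hc Hd Hd'); auto|].
  - unfold remainder. rewrite taylor_0, Hy0, lin_coef_O. ring.
  - apply Rmult_le_compat_l; [exact HW0|]. unfold iint_monom, Rdiv.
    apply Rmult_le_compat_r;
      [apply Rlt_le, Rinv_0_lt_compat, Rmult_lt_0_compat; apply lt_0_INR; lia|].
    apply Rmult_le_compat_l; [exact Hc | apply pow_incr; lra].
Qed.

Lemma remainder_bound (i M : nat) : (1 + i * S (S k) <= M)%nat ->
  forall x, 0 <= x <= X -> Rabs (remainder M x) <= (Y + 1) * iint_monom c k X ^ S i.
Proof.
  assert (HY0 : 0 <= Y) by (eapply Rle_trans; [apply Rabs_pos | apply (HY 0); lra]).
  assert (Hb0 : 0 <= iint_monom c k X).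
  { unfold iint_monom. apply Rmult_le_pos; [apply Rmult_le_pos; [exact Hc | apply pow_le; lra]|].
    apply Rlt_le, Rinv_0_lt_compat, Rmult_lt_0_compat; apply lt_0_INR; lia. }
  assert (Hbase : forall N, (1 <= N)%nat -> forall x, 0 <= x <= X ->
                    Rabs (remainder N x) <= (Y + 1) * iint_monom c k X).
  { intros N. induction N as [N IH] using (well_founded_induction Wf_nat.lt_wf). intros HN.
    apply remainder_bound_step; [exact HN|]. intros x Hx.
    destruct (Nat.leb (S (S k)) N) eqn:Hle; [apply Nat.leb_le in Hle|specialize (HY x Hx); lra].
    destruct (N - S (S k))%nat as [|N'] eqn:HN'.
    - unfold remainder, taylor. simpl. rewrite lin_coef_O.
      specialize (HY x Hx). apply Rabs_le_between in HY. apply Rabs_le_between. lra.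
    - eapply Rle_trans; [apply IH; [lia | lia | exact Hx]|]. nra. }
  revert M. induction i as [|i IH]; intros M HM x Hx.
  - rewrite pow_1. apply Hbase; [lia | exact Hx].
  - rewrite <- tech_pow_Rmult, (Rmult_comm (iint_monom c k X)), <- Rmult_assoc.
    apply remainder_bound_step; [lia | | exact Hx]. intros t Ht.
    destruct (Nat.leb_spec (S (S k)) M); [|lia].
    apply IH; [simpl in HM |- *; lia | exact Ht].
Qed.

End TaylorRemainder.

(** * Increasing binary trees *)

Lemma binomial_mul_fact (a b : nat) :
  Binomial.C (a + b) a * INR (Factorial.fact a) * INR (Factorial.fact b)
  = INR (Factorial.fact (a + b)).
Proof.
  unfold Binomial.C. replace (a + b - a)%nat with b by lia.
  pose proof (INR_fact_lt_0 a). pose proof (INR_fact_lt_0 b). field. lra.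
Qed.

Lemma nlab_node_bounds (l r : ptree) :
  0 < nlab l <= INR (Factorial.fact (psize l)) -> 0 < nlab r <= INR (Factorial.fact (psize r)) ->
  0 < nlab (Node l r) <= INR (Factorial.fact (psize l + psize r)).
Proof.
  intros Hl Hr. cbn [nlab]. rewrite <- binomial_mul_fact.
  assert (0 < Binomial.C (psize l + psize r) (psize l)).
  { unfold Binomial.C. apply Rdiv_lt_0_compat; [apply INR_fact_lt_0|].
    apply Rmult_lt_0_compat; apply INR_fact_lt_0. }
  split.
  - apply Rmult_lt_0_compat; [apply Rmult_lt_0_compat|]; lra.
  - apply Rmult_le_compat; [nra | lra | apply Rmult_le_compat_l; lra | lra].
Qed.

Lemma nlab_bounds (t : ptree) : 0 < nlab t <= INR (Factorial.fact (psize t)).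
Proof.
  induction t as [|l IHl r IHr]; [simpl; lra|].
  pose proof (nlab_node_bounds l r IHl IHr).
  cbn [psize]. rewrite fact_simpl, mult_INR.
  assert (1 <= INR (S (psize l + psize r))) by (apply (le_INR 1); lia).
  pose proof (INR_fact_lt_0 (psize l + psize r)). nra.
Qed.

Lemma wt_mul_size_bounds (t : ptree) : (1 <= psize t)%nat -> 0 < wt t * INR (psize t) <= 1.
Proof.
  destruct t as [|l r]; [simpl; lia|]. intros _.
  destruct (nlab_node_bounds l r (nlab_bounds l) (nlab_bounds r)) as [Hpos Hle].
  unfold wt. cbn [psize]. rewrite fact_simpl, mult_INR.
  pose proof (INR_fact_lt_0 (psize l + psize r)).
  assert (0 < INR (S (psize l + psize r))) by (apply lt_0_INR; lia).
  set (N := (psize l + psize r)%nat) in *.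
  replace (nlab (Node l r) / (INR (S N) * INR (Factorial.fact N)) * INR (S N))
    with (nlab (Node l r) / INR (Factorial.fact N)) by (field; lra).
  split; [apply Rdiv_lt_0_compat; lra|].
  apply Rmult_le_reg_r with (INR (Factorial.fact N)); [lra|].
  unfold Rdiv. rewrite Rmult_assoc, Rinv_l by lra. lra.
Qed.

Definition PS_one_plus (s : nat -> R) (n : nat) : R := PS_monom 1 0 n + s n.

Lemma is_S_coeffs_riccati (t : ptree) (s : nat -> R) : is_S_coeffs t s ->
  PS_one_plus s O = 1 /\
  forall n, PS_derive (PS_one_plus s) n =
    PS_mult (PS_one_plus s) (PS_one_plus s) n - PS_monom (wt t * INR (psize t)) (psize t - 1) n.
Proof.
  intros [Hs0 Hs]. unfold PS_one_plus. split; [rewrite Hs0; unfold PS_monom; simpl; ring|].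
  intros n. unfold PS_derive, PS_monom at 1 3. simpl Nat.eqb. rewrite Rplus_0_l, Hs.
  unfold PS_mult, PS_monom.
  rewrite (sum_eq (fun i => ((if Nat.eqb i 0 then 1 else 0) + s i)
                           * ((if Nat.eqb (n - i) 0 then 1 else 0) + s (n - i)%nat))
                  (fun i => (if Nat.eqb i 0 then (if Nat.eqb n 0 then 1 else 0) else 0)
                            + (if Nat.eqb i 0 then s n else 0)
                            + ((if Nat.eqb i n then s n else 0) + s i * s (n - i)%nat))).
  - rewrite !plus_sum, !sum_f_R0_delta.
    destruct (Nat.leb_spec 0 n), (Nat.leb_spec n n); try lia. ring.
  - intros i Hi. destruct (Nat.eqb_spec i 0), (Nat.eqb_spec i n), (Nat.eqb_spec (n - i) 0),
      (Nat.eqb_spec n 0); subst; try lia; rewrite ?Nat.sub_0_r, ?Nat.sub_diag, ?Hs0; ring.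
Qed.

Lemma exp_le_exp (a b : R) : a <= b -> exp a <= exp b.
Proof. intros [Hlt|<-]; [left; apply exp_increasing, Hlt | right; reflexivity]. Qed.

Lemma ln_ge_1 (x : R) : 3 <= x -> 1 <= ln x.
Proof.
  intros Hx. rewrite <- (ln_exp 1). apply ln_le; [apply exp_pos|].
  pose proof exp_le_3. lra.
Qed.

Lemma ln_le_div_mul_ln (k n : R) : 3 <= k -> k <= n -> ln n <= n / k * ln k.
Proof.
  intros Hk Hn.
  replace n with (k * (n / k)) at 1 by (field; lra).
  rewrite ln_mult by (try apply Rdiv_lt_0_compat; lra).
  assert (1 <= n / k) by (apply Rmult_le_reg_r with k; [lra|]; unfold Rdiv;
                          rewrite Rmult_assoc, Rinv_l; lra).
  assert (ln (n / k) <= n / k - 1).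
  { pose proof (exp_ineq1_le (ln (n / k))) as He. rewrite exp_ln in He by lra. lra. }
  pose proof (ln_ge_1 k Hk). nra.
Qed.

Lemma pow_one_plus_inv_le_9 (k : nat) : (1 <= k)%nat -> (1 + / INR k) ^ S k <= 9.
Proof.
  intros Hk. assert (Hk' : 1 <= INR k) by (apply (le_INR 1); exact Hk).
  assert (0 < / INR k) by (apply Rinv_0_lt_compat; lra).
  apply Rle_trans with (exp (/ INR k) ^ S k).
  { apply pow_incr. split; [lra | apply exp_ineq1_le]. }
  rewrite <- Rpower_pow by apply exp_pos. unfold Rpower. rewrite ln_exp.
  apply Rle_trans with (exp 2).
  - apply exp_le_exp. rewrite S_INR.
    apply Rmult_le_reg_r with (INR k); [lra|].
    rewrite Rmult_assoc, Rinv_l by lra. lra.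
  - replace 2 with (1 + 1) by ring. rewrite exp_plus.
    pose proof exp_le_3. pose proof (exp_pos 1). nra.
Qed.

Lemma Rpower_ge_of_root_le (A e x : R) :
  0 < A -> 0 < e -> Rpower A (/ e) <= x -> A <= Rpower x e.
Proof.
  intros HA He Hx.
  assert (0 < Rpower A (/ e)) by (unfold Rpower; apply exp_pos).
  replace A with (Rpower (Rpower A (/ e)) e) at 1
    by (rewrite Rpower_mult, Rinv_l, Rpower_1; lra).
  apply Rle_Rpower_l; lra.
Qed.

Lemma error_bound_weaken (eta eta0 : R) (n : nat) : eta0 <= eta -> 3 <= INR n ->
  2 / Rpower (INR n) (1 - eta0) <= 2 * ln (INR n) / Rpower (INR n) (1 - eta).
Proof.
  intros He Hn. pose proof (ln_ge_1 _ Hn).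
  assert (0 < Rpower (INR n) (1 - eta)) by (unfold Rpower; apply exp_pos).
  assert (Rpower (INR n) (1 - eta) <= Rpower (INR n) (1 - eta0)) by (apply Rle_Rpower; lra).
  unfold Rdiv. apply Rle_trans with (2 * / Rpower (INR n) (1 - eta)).
  - apply Rmult_le_compat_l; [lra | apply Rinv_le_contravar; assumption].
  - assert (0 < / Rpower (INR n) (1 - eta)) by (apply Rinv_0_lt_compat; assumption). nra.
Qed.

(** * Trees of large size *)

(* Bounds |y| on [0, 2] via the energy estimate y^2 + y'^2 <= 2 e^(10 x). *)
Definition damped_sup : R := 1 + 2 * exp 20.

Lemma damped_sup_ge_1 : 1 <= damped_sup.
Proof. unfold damped_sup. pose proof (exp_pos 20). lra. Qed.

Section LargeTree.

Variables (eta c rho : R) (k1 : nat) (u u' : R -> R).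

Local Notation Y := damped_sup.
Let X := 1 + / INR (S k1).
Let b := iint_monom c k1 X.
Let y := damped u.
Let z := damped (fun t => u' t - u t).

Hypotheses (Heta : 0 < eta <= 1) (Hc : 0 < c <= 1)
  (Hk : 9 * (Y + 1) < INR (S k1)) (Hketa : 108 * (Y + 1) <= Rpower (INR (S k1)) eta)
  (Hu : forall x, is_derive u x (u' x))
  (Hu' : forall x, is_derive u' x (2 * u' x - (1 - c * x ^ k1) * u x))
  (Hu0 : u 0 = -1) (Hu'0 : u' 0 = 0)
  (Hrho : 0 < rho) (Hurho : u rho = 0) (Hrho_min : forall x, 0 < x < rho -> u x <> 0).

Lemma X_bounds : 1 < X <= 2.
Proof.
  assert (1 <= INR (S k1)) by (apply (le_INR 1); lia).
  assert (0 < / INR (S k1) <= 1).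
  { split; [apply Rinv_0_lt_compat; lra|]. rewrite <- Rinv_1. apply Rinv_le_contravar; lra. }
  unfold X. lra.
Qed.

Lemma X_pow_le_9 : X ^ S (S k1) <= 9.
Proof. apply pow_one_plus_inv_le_9. lia. Qed.

Lemma weight_le_9 (x : R) : 0 <= x <= X -> 0 <= c * x ^ k1 <= 9.
Proof.
  intros Hx. pose proof X_bounds. pose proof X_pow_le_9.
  assert (x ^ k1 <= X ^ S (S k1)).
  { apply Rle_trans with (X ^ k1); [apply pow_incr; lra | apply Rle_pow; [lra | lia]]. }
  assert (0 <= x ^ k1) by (apply pow_le; lra).
  split; [apply Rmult_le_pos; lra | nra].
Qed.

Lemma damped_ode :
  (forall x, is_derive y x (z x)) /\ (forall x, is_derive z x (c * x ^ k1 * y x)).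
Proof. exact (damped_linear_ode c k1 u u' Hu Hu'). Qed.

Lemma damped_initial : y 0 = -1 /\ z 0 = 1.
Proof. unfold y, z, damped. rewrite Ropp_0, exp_0, Hu0, Hu'0. split; ring. Qed.

Lemma damped_bound (x : R) : 0 <= x <= X -> Rabs (y x) <= Y.
Proof.
  intros Hx. destruct damped_ode as [Hy Hz]. destruct damped_initial as [Hy0 Hz0].
  pose proof (energy_le_exp y z (fun t => c * t ^ k1) X Hy Hz weight_le_9 x Hx) as Hen.
  rewrite Hy0, Hz0 in Hen.
  assert (exp (10 * x) <= exp 20) by (apply exp_le_exp; pose proof X_bounds; lra).
  assert (Hsq : Rabs (y x) ^ 2 = y x ^ 2) by apply pow2_abs.
  assert (0 <= z x ^ 2) by (apply pow2_ge_0).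
  assert (0 <= (Rabs (y x) - 1/2) ^ 2) by (apply pow2_ge_0).
  unfold damped_sup. nra.
Qed.

Lemma b_mul_bound : b * (INR (S k1) * INR (S (S k1))) <= 9.
Proof.
  pose proof X_pow_le_9. pose proof X_bounds.
  assert (0 < INR (S k1) * INR (S (S k1))) by (apply Rmult_lt_0_compat; apply lt_0_INR; lia).
  unfold b, iint_monom.
  replace (c * X ^ S (S k1) / (INR (S k1) * INR (S (S k1))) * (INR (S k1) * INR (S (S k1))))
    with (c * X ^ S (S k1)) by (field; split; apply not_0_INR; lia).
  assert (0 <= X ^ S (S k1)) by (apply pow_le; lra). nra.
Qed.

Lemma b_small : 0 <= b /\ (Y + 1) * b < / INR (S (S k1)).
Proof.
  pose proof b_mul_bound. pose proof damped_sup_ge_1. pose proof X_bounds.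
  assert (0 < INR (S k1)) by (apply lt_0_INR; lia).
  assert (HS : INR (S (S k1)) = INR (S k1) + 1) by apply S_INR.
  assert (Hb0 : 0 <= b).
  { unfold b, iint_monom. apply Rmult_le_pos; [apply Rmult_le_pos; [lra | apply pow_le; lra]|].
    apply Rlt_le, Rinv_0_lt_compat, Rmult_lt_0_compat; apply lt_0_INR; lia. }
  split; [exact Hb0|].
  apply Rmult_lt_reg_r with (INR (S (S k1))); [lra|]. rewrite Rinv_l by lra.
  apply Rmult_lt_reg_r with (INR (S k1)); [lra|]. rewrite HS in *. nra.
Qed.

Lemma remainder_decay (i M : nat) : (1 + i * S (S k1) <= M)%nat ->
  forall x, 0 <= x <= X -> Rabs (remainder c k1 y M x) <= (Y + 1) * b ^ S i.
Proof.
  destruct damped_ode as [Hy Hz]. destruct damped_initial as [Hy0 Hz0].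
  destruct b_small as [Hb0 Hb]. pose proof X_bounds. pose proof damped_sup_ge_1.
  assert (/ INR (S (S k1)) <= 1) by (rewrite <- Rinv_1; apply Rinv_le_contravar;
                                     [lra | apply (le_INR 1); lia]).
  apply (remainder_bound c X Y k1 y z); try lra; auto.
  - fold b. nra.
  - exact damped_bound.
Qed.

Lemma damped_near_linear (x : R) :
  0 <= x <= X -> Rabs (y x - (x - 1)) < / INR (S (S k1)).
Proof.
  intros Hx. destruct b_small as [Hb0 Hb].
  pose proof (remainder_decay 0 1 ltac:(lia) x Hx) as Hr.
  unfold remainder, taylor in Hr. simpl in Hr. rewrite lin_coef_O, lin_coef_1 in Hr.
  replace (y x - (-1 * 1 + 1 * (x * 1))) with (y x - (x - 1)) in Hr by ring.
  rewrite Rmult_1_r in Hr. lra.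
Qed.

Lemma rho_bounds : 1/2 < rho <= X.
Proof.
  destruct damped_ode as [Hy _]. pose proof X_bounds.
  assert (Hk2 : 4 <= INR (S (S k1))).
  { rewrite S_INR. pose proof damped_sup_ge_1. lra. }
  assert (HkX : / INR (S (S k1)) < X - 1).
  { replace (X - 1) with (/ INR (S k1)) by (unfold X; ring).
    apply Rinv_lt_contravar; [apply Rmult_lt_0_compat; apply lt_0_INR; lia|].
    rewrite (S_INR (S k1)). lra. }
  assert (Hyneg : forall x, 0 < x <= 1/2 -> y x < 0).
  { intros x Hx. pose proof (damped_near_linear x ltac:(lra)) as Hlin.
    apply Rabs_def2 in Hlin. assert (/ INR (S (S k1)) <= / 4) by (apply Rinv_le_contravar; lra).
    lra. }
  assert (HyX : 0 < y X).
  { pose proof (damped_near_linear X ltac:(lra)) as Hlin. apply Rabs_def2 in Hlin. lra. }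
  assert (Hcont : continuity y).
  { intros x. apply continuity_pt_filterlim, (ex_derive_continuous y). eexists. apply Hy. }
  destruct (IVT y 0 X Hcont ltac:(lra) ltac:(destruct damped_initial; lra) HyX)
    as [x0 [Hx0 Hyx0]].
  assert (Hux0 : u x0 = 0).
  { unfold y, damped in Hyx0. pose proof (exp_pos (- x0)). nra. }
  split.
  - destruct (Rlt_le_dec (1/2) rho) as [|Hle]; [assumption|].
    assert (y rho = 0) by (unfold y, damped; rewrite Hurho; ring).
    specialize (Hyneg rho ltac:(lra)). lra.
  - destruct (Rle_lt_dec rho x0) as [|Hlt]; [lra|].
    assert (x0 <> 0) by (intros ->; destruct damped_initial; lra).
    exfalso. apply (Hrho_min x0); [lra | exact Hux0].
Qed.

Lemma quotient_decay (i m : nat) : (1 + i * S (S k1) <= m)%nat ->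
  Rabs (PS_div_X_sub rho (lin_coef c k1) m) * rho ^ S m <= (Y + 1) * b ^ S i.
Proof.
  intros Hm. pose proof rho_bounds.
  rewrite <- (Rabs_pos_eq (rho ^ S m)) by (apply pow_le; lra).
  rewrite <- Rabs_mult, PS_div_X_sub_pow by lra.
  replace (- taylor (lin_coef c k1) m rho) with (remainder c k1 y m rho)
    by (unfold remainder, y, damped; rewrite Hurho; ring).
  apply remainder_decay; [exact Hm | lra].
Qed.

Let kap := Rpower (INR (S k1)) ((1 - eta) / INR (S k1)).

Lemma kap_bounds : 1 <= kap <= 3.
Proof.
  assert (Hk3 : 3 <= INR (S k1)) by (pose proof damped_sup_ge_1; lra).
  pose proof (ln_ge_1 _ Hk3).
  assert (ln (INR (S k1)) <= INR (S k1) - 1).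
  { pose proof (exp_ineq1_le (ln (INR (S k1)))) as He. rewrite exp_ln in He by lra. lra. }
  assert (Hexp : 0 <= (1 - eta) / INR (S k1) <= / INR (S k1)).
  { unfold Rdiv. split; [apply Rmult_le_pos; [lra | apply Rlt_le, Rinv_0_lt_compat; lra]|].
    rewrite <- (Rmult_1_l (/ INR (S k1))) at 2.
    apply Rmult_le_compat_r; [apply Rlt_le, Rinv_0_lt_compat|]; lra. }
  assert (/ INR (S k1) * ln (INR (S k1)) <= 1).
  { apply Rmult_le_reg_l with (INR (S k1)); [lra|].
    rewrite <- Rmult_assoc, Rinv_r by lra. lra. }
  unfold kap, Rpower. split.
  - apply Rle_trans with (exp 0); [rewrite exp_0; lra|].
    apply exp_le_exp, Rmult_le_pos; [apply Hexp | lra].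
  - apply Rle_trans with (exp 1); [apply exp_le_exp | apply exp_le_3].
    apply Rle_trans with (/ INR (S k1) * ln (INR (S k1))); [|lra].
    apply Rmult_le_compat_r; [lra | apply Hexp].
Qed.

Lemma kap_pow_ge (n : nat) : (S k1 <= n)%nat -> Rpower (INR n) (1 - eta) <= kap ^ n.
Proof.
  intros Hn.
  assert (Hk3 : 3 <= INR (S k1)) by (pose proof damped_sup_ge_1; lra).
  assert (Hkn : INR (S k1) <= INR n) by (apply le_INR; exact Hn).
  pose proof (ln_le_div_mul_ln (INR (S k1)) (INR n) Hk3 Hkn).
  rewrite <- Rpower_pow by (unfold kap, Rpower; apply exp_pos).
  unfold kap. rewrite Rpower_mult. unfold Rpower. apply exp_le_exp.
  replace ((1 - eta) / INR (S k1) * INR n * ln (INR (S k1)))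
    with ((1 - eta) * (INR n / INR (S k1) * ln (INR (S k1)))) by (field; lra).
  apply Rmult_le_compat_l; lra.
Qed.

Lemma block_condition : 4 * INR (S (S k1)) * (Y + 1) * (b * kap ^ S (S k1)) <= 1.
Proof.
  pose proof b_mul_bound. destruct b_small as [Hb0 _]. destruct kap_bounds as [Hkap1 Hkap3].
  pose proof damped_sup_ge_1.
  set (k := INR (S k1)) in *.
  assert (Hk0 : 0 < k) by lra.
  assert (HS : INR (S (S k1)) = k + 1) by apply S_INR.
  rewrite HS in *.
  assert (Hkapk : kap ^ S k1 = Rpower k (1 - eta)).
  { rewrite <- Rpower_pow by lra. unfold kap. rewrite Rpower_mult. f_equal. fold k. field. lra. }
  assert (Hsplit : Rpower k (1 - eta) * Rpower k eta = k).
  { rewrite <- Rpower_plus. replace (1 - eta + eta) with 1 by ring. apply Rpower_1. lra. }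
  assert (HA : 0 < Rpower k eta) by (unfold Rpower; apply exp_pos).
  assert (HB : 0 <= Rpower k (1 - eta)) by (unfold Rpower; left; apply exp_pos).
  replace (kap ^ S (S k1)) with (Rpower k (1 - eta) * kap) by (rewrite <- Hkapk; simpl; ring).
  assert (Hbk : b * (k + 1) * k <= 9) by lra.
  apply Rmult_le_reg_r with (Rpower k eta); [exact HA|].
  replace (4 * (k + 1) * (Y + 1) * (b * (Rpower k (1 - eta) * kap)) * Rpower k eta)
    with (4 * (Y + 1) * kap * (b * (k + 1) * (Rpower k (1 - eta) * Rpower k eta))) by ring.
  rewrite Hsplit.
  apply Rle_trans with (4 * (Y + 1) * 3 * 9); [|lra].
  apply Rmult_le_compat; [apply Rmult_le_pos; lra | apply Rmult_le_pos; [apply Rmult_le_pos|]; lra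
                        | apply Rmult_le_compat_l; lra | exact Hbk].
Qed.

Lemma sub_pole_coef_bound (F : nat -> R) : F O = 1 ->
  (forall n, PS_derive F n = PS_mult F F n - PS_monom c k1 n) ->
  forall n, Rabs (F n - PS_geom rho n) * (rho * kap) ^ n <= 1.
Proof.
  intros HF0 HF.
  destruct rho_bounds as [Hrho_half _]. pose proof damped_sup_ge_1.
  destruct b_small as [Hb0 _]. destruct kap_bounds as [Hkap1 _].
  set (v := lin_coef c k1). set (q := PS_div_X_sub rho v).
  assert (Hq0 : q O = / rho) by (unfold q, v; simpl; rewrite lin_coef_O; field; lra).
  pose proof (riccati_mult_linear c k1 F v HF (lin_coef_derive2 c k1) HF0
                (lin_coef_O c k1) (lin_coef_1 c k1)) as HFv.
  pose proof (log_derive_remove_pole rho F v q ltac:(lra) HFv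
                (fun m => eq_sym (PS_mul_X_sub_div rho v m ltac:(lra)))) as Hhq.
  assert (Hq0pos : 0 < q O) by (rewrite Hq0; apply Rinv_0_lt_compat; lra).
  apply (log_derive_coef_bound _ q (rho * kap) ltac:(nra) Hq0pos Hhq); rewrite Hq0.
  - exact (block_derive_bound q (S (S k1)) rho kap (Y + 1) b ltac:(lia) Hrho_half Hkap1
             ltac:(lra) Hb0 block_condition quotient_decay).
  - exact (block_tail_bound q (S (S k1)) rho kap (Y + 1) b ltac:(lia) Hrho_half Hkap1
             ltac:(lra) Hb0 block_condition quotient_decay).
Qed.

Lemma riccati_coef_expansion (F : nat -> R) : F O = 1 ->
  (forall n, PS_derive F n = PS_mult F F n - PS_monom c k1 n) ->
  forall n, (S k1 <= n)%nat -> Rabs (F n * rho ^ S n - 1) <= 2 / Rpower (INR n) (1 - eta).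
Proof.
  intros HF0 HF n Hn.
  pose proof (sub_pole_coef_bound F HF0 HF n) as Hh.
  destruct rho_bounds as [Hrho_half Hrho_X]. pose proof X_bounds.
  destruct kap_bounds as [Hkap1 _].
  assert (Hrn : 0 < rho ^ S n) by (apply pow_lt; lra).
  assert (Hkn : 0 < kap ^ n) by (apply pow_lt; lra).
  pose proof (kap_pow_ge n Hn) as Hpow.
  assert (Hpos : 0 < Rpower (INR n) (1 - eta)) by (unfold Rpower; apply exp_pos).
  replace (F n * rho ^ S n - 1) with ((F n - PS_geom rho n) * rho ^ S n)
    by (unfold PS_geom; field; lra).
  rewrite Rabs_mult, (Rabs_pos_eq (rho ^ S n)) by lra.
  replace (rho ^ S n) with ((rho * kap) ^ n * (rho / kap ^ n))
    by (rewrite Rpow_mult_distr; simpl; field; lra).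
  rewrite <- Rmult_assoc.
  apply Rle_trans with (1 * (2 / kap ^ n)).
  - apply Rmult_le_compat; [apply Rmult_le_pos; [apply Rabs_pos | apply pow_le; nra]
                           | apply Rdiv_le_0_compat; lra | exact Hh |].
    unfold Rdiv. apply Rmult_le_compat_r; [apply Rlt_le, Rinv_0_lt_compat |]; lra.
  - rewrite Rmult_1_l. unfold Rdiv. apply Rmult_le_compat_l; [lra|].
    apply Rinv_le_contravar; assumption.
Qed.

End LargeTree.

Lemma large_size_threshold (eta : R) : 0 < eta ->
  exists D : nat, (0 < D)%nat /\ forall k : nat, (D <= k)%nat ->
    9 * (damped_sup + 1) < INR k /\ 108 * (damped_sup + 1) <= Rpower (INR k) eta.
Proof.
  intros Heta. pose proof damped_sup_ge_1.
  set (A := 108 * (damped_sup + 1)).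
  destruct (INR_unbounded (Rmax (9 * (damped_sup + 1)) (Rpower A (/ eta)))) as [D HD].
  pose proof (Rmax_l (9 * (damped_sup + 1)) (Rpower A (/ eta))).
  pose proof (Rmax_r (9 * (damped_sup + 1)) (Rpower A (/ eta))).
  exists D. split; [destruct D; [simpl in HD; lra | lia]|].
  intros k Hk. apply le_INR in Hk. split; [lra|].
  apply Rpower_ge_of_root_le; [unfold A; lra | exact Heta | lra].
Qed.

Theorem lemma3p5 :
  forall eta : R, 0 < eta ->
  exists (D : nat) (K : R) (N : nat),
    (0 < D)%nat /\
    forall (n : nat) (t : ptree), (N <= n)%nat ->
      (D <= psize t)%nat -> (psize t <= n)%nat ->
      forall (s : nat -> R) (u : R -> R) (rho : R),
        is_S_coeffs t s -> is_u t u -> smallest_pos_zero u rho ->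
        exists E : R,
          s n / T_coef n = / rho ^ (S n) * (1 + E) /\
          Rabs E <= K * ln (INR n) / Rpower (INR n) (1 - eta).
Proof.
  intros eta Heta.
  assert (He : 0 < Rmin eta 1 <= 1) by (split; [apply Rmin_glb_lt | apply Rmin_r]; lra).
  destruct (large_size_threshold (Rmin eta 1) (proj1 He)) as [D [HD0 HD]].
  exists D, 2, D. split; [exact HD0|].
  intros n t HNn HDt Htn s u rho Hs [u' [Hu [Hu' [Hu0 Hu'0]]]] [Hrho [Hurho Hmin]].
  destruct (HD (psize t) HDt) as [Hk Hketa]. destruct (HD n HNn) as [Hn _].
  replace (psize t) with (S (psize t - 1)) in Hk, Hketa by lia.
  destruct (is_S_coeffs_riccati t s Hs) as [HF0 HF].
  pose proof (riccati_coef_expansion (Rmin eta 1) _ rho (psize t - 1) u u' He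
                (wt_mul_size_bounds t ltac:(lia)) Hk Hketa Hu Hu' Hu0 Hu'0 Hrho Hurho Hmin
                _ HF0 HF n ltac:(lia)) as Hexp.
  exists (PS_one_plus s n * rho ^ S n - 1). split.
  - destruct n as [|n]; [lia|]. unfold T_coef, PS_one_plus, PS_monom. simpl.
    field. split; [apply pow_nonzero|]; lra.
  - eapply Rle_trans; [exact Hexp|].
    apply error_bound_weaken; [apply Rmin_l | pose proof damped_sup_ge_1; lra].
Qed.
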